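(* Let $q=2^m$ with $m\ge 4$ even. Then the trace code $\mathrm{Tr}_{q^2/q}(\mathcal C_{\{3,5\}})$ has parameters $[q+1,4,q-4]_q$.
   Context: Let $U_{q+1}$ be the set of $(q+1)$-th roots of unity in $\mathrm{GF}(q^2)$; coordinates are indexed by $U_{q+1}$. Define $\mathcal C_{\{3,5\}}=\{(a_3u^3+a_{q-2}u^{q-2}+a_5u^5+a_{q-4}u^{q-4})_{u\in U_{q+1}}: a_3,a_{q-2},a_5,a_{q-4}\in\mathrm{GF}(q^2)\}$, and $\mathrm{Tr}_{q^2/q}(\mathcal C)=\{(\mathrm{Tr}_{q^2/q}(c_u))_{u\in U_{q+1}}:(c_u)\in\mathcal C\}$, where $\mathrm{Tr}_{q^2/q}(x)=x+x^q$. $[n,k,d]_q$ denotes a linear code over $\mathrm{GF}(q)$ of length $n$, dimension $k$, minimum distance $d$. *)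

From HB Require Import structures.
From mathcomp Require Import all_boot all_order all_algebra all_field.
Set Implicit Arguments. Unset Strict Implicit. Unset Printing Implicit Defensive.
Import GRing.Theory.
Local Open Scope ring_scope.

(* L plays the role of GF(q^2); q is the size of the subfield GF(q). *)

Definition GFq (L : finFieldType) (q : nat) : {set L} := [set x : L | x ^+ q == x].

(* U_{q+1}: the (q+1)-th roots of unity in L, as a finite (sub)type;
   it is the coordinate index set of the codes. *)
Definition Uq (L : finFieldType) (q : nat) := {u : L | u ^+ q.+1 == 1}.

Definition trq (L : finFieldType) (q : nat) (x : L) : L := x + x ^+ q.

Definition cw35 (L : finFieldType) (q : nat) (a : L * L * L * L) : {ffun Uq L q -> L} :=
  let: (a3, aq2, a5, aq4) := a in
  [ffun u => a3 * (val u) ^+ 3 + aq2 * (val u) ^+ (q - 2)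
             + a5 * (val u) ^+ 5 + aq4 * (val u) ^+ (q - 4)].

Definition C35 (L : finFieldType) (q : nat) : {set {ffun Uq L q -> L}} :=
  [set cw35 q a | a in [set: L * L * L * L]].

Definition trace_code (L : finFieldType) (q : nat) (C : {set {ffun Uq L q -> L}})
  : {set {ffun Uq L q -> L}} :=
  [set [ffun u => trq q (c u)] | c : {ffun Uq L q -> L} in C].

Definition hwt (L : finFieldType) (q : nat) (c : {ffun Uq L q -> L}) : nat :=
  #|[set u | c u != 0]|.

(* C is a GF(q)-linear code (entries in GF(q), closed under + and GF(q)-scaling)
   with parameters [n, k, d]_q : length n, q^k codewords (dimension k over GF(q)),
   minimum (Hamming) distance d = minimum weight of a nonzero codeword. *)
Definition is_code_params (L : finFieldType) (q : nat) (C : {set {ffun Uq L q -> L}})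
  (n k d : nat) : Prop :=
  (forall (c : {ffun Uq L q -> L}) u, c \in C -> c u \in GFq L q) /\
  (0 : {ffun Uq L q -> L}) \in C /\
  (forall c1 c2 : {ffun Uq L q -> L}, c1 \in C -> c2 \in C -> c1 + c2 \in C) /\
  (forall (l : L) (c : {ffun Uq L q -> L}), l \in GFq L q -> c \in C ->
     [ffun u => l * c u] \in C) /\
  #|{: Uq L q}| = n /\
  #|C| = (q ^ k)%N /\
  (exists2 c : {ffun Uq L q -> L}, c \in C & (c != 0) /\ hwt c = d) /\
  (forall c : {ffun Uq L q -> L}, c \in C -> c != 0 -> (d <= hwt c)%N).

From HB Require Import structures.
From mathcomp Require Import all_boot all_order all_algebra all_field.
From mathcomp Require Import cyclic ring zify.
Set Implicit Arguments. Unset Strict Implicit. Unset Printing Implicit Defensive.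
Import GRing.Theory.
Local Open Scope ring_scope.

(* On the unit circle U = {u | u^(q+1) = 1} we have u^q = u^-1, so
   Tr(a u^(q-2)) = Tr(a^q u^3) and Tr(a u^(q-4)) = Tr(a^q u^5): the trace code
   consists of the words c(A,B) : u |-> Tr(A u^3 + B u^5).  For u in U,
   u^5 c(A,B)(u) is the value at u^2 of B^q + A^q X + A X^4 + B X^5, and
   squaring is injective in characteristic 2, so a nonzero c(A,B) vanishes at
   most 5 times on U.  Hence (A,B) |-> c(A,B) is injective (q^4 words) and
   every nonzero word has weight at least q + 1 - 5 = q - 4.
   The weight q - 4 is attained by c(a^2,1), a = 1 + y1 + y2 in GF(q), for
   which u^5 c(a^2,1)(u) = (1 + au + au^4 + u^5)^2 and
   1 + aX + aX^4 + X^5 = (X + 1)(X^2 + y1 X + 1)(X^2 + y2 X + 1) whenever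
   y1 y2 = y1 + y2.  Both quadratics get two roots on U by taking y1 = Tr(x1)
   for some x1 in U which is not a cube root of unity, and y2 = y1/(y1 + 1),
   which is Tr(x2) for x2 = (x1 + w y1)/(y1 + 1) with w a primitive cube root
   of unity; w lies in GF(q) because m is even. *)

Definition quadr (R : nzRingType) (y u : R) : R := u ^+ 2 + y * u + 1.

Section Char2.
Variable F : fieldType.
Hypothesis F2 : 2%N \in [pchar F].
Implicit Types y u v x : F.

Lemma sqrf_inj_pchar2 : injective (fun x : F => x ^+ 2).
Proof. exact: fmorph_inj (pFrobenius_aut F2). Qed.

Lemma sqrrD_pchar2 x y : (x + y) ^+ 2 = x ^+ 2 + y ^+ 2.
Proof. by rewrite sqrrD mulr2n (addrr_pchar2 F2) addr0. Qed.

Lemma addr_eq0_pchar2 x y : (x + y == 0) = (x == y).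
Proof. by rewrite addr_eq0 (oppr_pchar2 F2). Qed.

Lemma quadr0_root x : quadr 0 x = 0 -> x = 1.
Proof.
move=> hx; have : (x + 1) ^+ 2 == 0.
  by rewrite sqrrD_pchar2 expr1n -hx /quadr mul0r addr0.
by rewrite expf_eq0 /= addr_eq0_pchar2 => /eqP.
Qed.

Lemma quadr_root_neq1 y u : quadr y u = 0 -> y != 0 -> u != 1.
Proof.
move=> hu y0; apply: contra_eqN hu => /eqP->.
by rewrite /quadr expr1n mulr1 addrAC (addrr_pchar2 F2) add0r.
Qed.

Lemma quadr_root_neq0 y u : quadr y u = 0 -> u != 0.
Proof.
move=> hu; apply: contra_eqN hu => /eqP->.
by rewrite /quadr expr0n mulr0 !add0r oner_eq0.
Qed.

Lemma quadr_roots_neq ya yb u v :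
  quadr ya u = 0 -> quadr yb v = 0 -> ya != yb -> u != v.
Proof.
move=> hu hv; apply: contraNneq => uv; subst v.
have : (ya - yb) * u = quadr ya u - quadr yb u by rewrite /quadr; ring.
rewrite hu hv subrr => /eqP.
by rewrite mulf_eq0 (negbTE (quadr_root_neq0 hu)) orbF subr_eq0.
Qed.

Lemma uniq_quadr_roots y1 y2 x1 x1' x2 x2' :
  y1 != 0 -> y2 != 0 -> y1 != y2 ->
  quadr y1 x1 = 0 -> quadr y1 x1' = 0 -> quadr y2 x2 = 0 -> quadr y2 x2' = 0 ->
  x1 != x1' -> x2 != x2' -> uniq [:: 1; x1; x1'; x2; x2'].
Proof.
move=> y1n0 y2n0 y12 r1 r1' r2 r2' x11 x22.
rewrite /= !inE !negb_or x11 x22 !(eq_sym 1).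
rewrite (quadr_root_neq1 r1) ?(quadr_root_neq1 r1') ?(quadr_root_neq1 r2) //.
rewrite (quadr_root_neq1 r2') // !(quadr_roots_neq _ _ y12) //.
Qed.

Lemma quintic_factor y1 y2 u : y1 * y2 = y1 + y2 ->
  1 + (1 + y1 + y2) * u + (1 + y1 + y2) * u ^+ 4 + u ^+ 5
    = (u + 1) * quadr y1 u * quadr y2 u.
Proof.
move=> y12; symmetry.
transitivity (1 + (1 + y1 + y2) * u + (1 + y1 + y2) * u ^+ 4 + u ^+ 5
   + (2%:R * (1 + y1 + y2) + (y1 * y2 - (y1 + y2))) * (u ^+ 3 + u ^+ 2)).
  by rewrite /quadr; ring.
by rewrite (pcharf0 F2) y12 subrr mul0r add0r mul0r addr0.
Qed.

Lemma div_addr1_pchar2 y : y != 0 -> y != 1 ->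
  [/\ y / (y + 1) != 0, y != y / (y + 1) & y * (y / (y + 1)) = y + y / (y + 1)].
Proof.
move=> y0 y1; have d0 : y + 1 != 0 by rewrite addr_eq0_pchar2.
have yy' : y * (y / (y + 1)) = y + y / (y + 1).
  apply: (mulIf d0); rewrite mulrDl -mulrA !divfK // mulrDr mulr1.
  by rewrite addrAC -addrA (addrr_pchar2 F2) addr0.
split=> //; first by rewrite mulf_neq0 ?invr_neq0.
apply: contra_neq y0 => e; move: yy'; rewrite -e (addrr_pchar2 F2) => /eqP.
by rewrite mulf_eq0 orbb => /eqP.
Qed.

End Char2.

Lemma subr1_mul_quadr1 (R : comNzRingType) (x : R) :
  (x - 1) * quadr 1 x = x ^+ 3 - 1.
Proof. by rewrite /quadr; ring. Qed.

Section UnityRoots.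
Variable F : finFieldType.

Let card_pred_gt0 : (0 < #|F|.-1)%N.
Proof. by rewrite -subn1 subn_gt0 finNzRing_gt1. Qed.

Lemma finField_prim_root : exists g : F, #|F|.-1.-primitive_root g.
Proof.
have : has #|F|.-1.-primitive_root (enum [pred x : F | x != 0]).
  apply: has_prim_root card_pred_gt0 _ (enum_uniq _) _; last first.
    by rewrite -cardE (cardC1 0).
  apply/allP => x; rewrite mem_enum inE => nx; apply/unity_rootP.
  by apply: (mulIf nx); rewrite mul1r -exprSr prednK ?expf_card // ltnW ?finNzRing_gt1.
by case/hasP => g _; exists g.
Qed.

Lemma card_unity_roots n :
  (n %| #|F|.-1)%N -> #|[pred x : F | n.-unity_root x]| = n.
Proof.
move=> n_dvd; have [g pg] := finField_prim_root.
have [k eN] := dvdnP n_dvd.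
have k0 : (0 < k)%N by move: card_pred_gt0; rewrite eN muln_gt0 => /andP [].
apply/eqP; rewrite eqn_leq; apply/andP; split.
  rewrite cardE; apply: max_unity_roots (dvdn_gt0 card_pred_gt0 n_dvd) _ (enum_uniq _).
  by apply/allP => x; rewrite mem_enum.
pose s := [seq g ^+ (k * i) | i <- iota 0 n].
apply: (@leq_trans (size s)); first by rewrite size_map size_iota.
rewrite cardE; apply: uniq_leq_size.
  rewrite map_inj_in_uniq ?iota_uniq // => i j; rewrite !mem_iota => hi hj.
  move/eqP; rewrite (eq_prim_root_expr pg) eN -!muln_modr eqn_pmul2l //.
  by rewrite !modn_small // => /eqP.
move=> x /mapP [i _ ->]; rewrite mem_enum inE; apply/unity_rootP.
by rewrite -exprM mulnAC -eN exprM (prim_expr_order pg) expr1n.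
Qed.

End UnityRoots.

Section TraceCode.
Variables (m : nat) (L : finFieldType).
Hypothesis hL : #|L| = (2 ^ m * 2 ^ m)%N.
Local Notation q := (2 ^ m)%N.
Implicit Types x y u w a A B : L.

Lemma L_pchar2 : 2%N \in [pchar L].
Proof. by apply: (@card_finPcharP _ _ (m + m)); rewrite ?expnD. Qed.

Lemma exprqD x y : (x + y) ^+ q = x ^+ q + y ^+ q.
Proof.
by apply: exprDn_pchar; rewrite (eq_pnat _ (pcharf_eq L_pchar2)) pnatX pnat_id.
Qed.

Lemma exprqK x : (x ^+ q) ^+ q = x.
Proof. by rewrite -exprM -hL expf_card. Qed.

Lemma trqD x y : trq q (x + y) = trq q x + trq q y.
Proof. by rewrite /trq exprqD addrACA. Qed.

Lemma trq_exprq x : trq q (x ^+ q) = trq q x.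
Proof. by rewrite /trq exprqK addrC. Qed.

Lemma exprq_trq x : trq q x ^+ q = trq q x.
Proof. by rewrite {1}/trq exprqD exprqK addrC. Qed.

Lemma trqZ a x : a ^+ q = a -> trq q (a * x) = a * trq q x.
Proof. by move=> aq; rewrite /trq exprMn aq mulrDr. Qed.

Lemma card_L_predE : #|L|.-1 = ((q - 1) * q.+1)%N.
Proof. have q0 : (0 < q)%N by rewrite expn_gt0. rewrite hL; nia. Qed.

Lemma card_Uq : #|{: Uq L q}| = q.+1.
Proof.
rewrite card_sig -[RHS](@card_unity_roots L) ?card_L_predE ?dvdn_mull //.
by apply: eq_card => x; rewrite !inE unity_rootE.
Qed.

Lemma exprUq u k n : u ^+ q.+1 = 1 -> u ^+ (q.+1 * k + n) = u ^+ n.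
Proof. by move=> hu; rewrite exprD exprM hu expr1n mul1r. Qed.

Lemma UqP (u : Uq L q) : val u ^+ q.+1 = 1.
Proof. exact/eqP/(valP u). Qed.

Lemma Uq_neq0 u : u ^+ q.+1 = 1 -> u != 0.
Proof.
by move=> hu; apply: contra_eqN hu => /eqP->; rewrite exprS mul0r eq_sym oner_eq0.
Qed.

Definition trace_cw A B : {ffun Uq L q -> L} :=
  [ffun u => trq q (A * val u ^+ 3 + B * val u ^+ 5)].

Definition trace_poly A B : {poly L} := Poly [:: B ^+ q; A ^+ q; 0; 0; A; B].

Lemma trace_poly_neq0 A B : (A != 0) || (B != 0) -> trace_poly A B != 0.
Proof.
apply: contraTneq => p0; rewrite negb_or !negbK.
have := coef_Poly [:: B ^+ q; A ^+ q; 0; 0; A; B] 4.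
have := coef_Poly [:: B ^+ q; A ^+ q; 0; 0; A; B] 5.
by rewrite -/(trace_poly A B) p0 !coef0 /= => <- <-; rewrite eqxx.
Qed.

Lemma trace_poly_horner A B u : u ^+ q.+1 = 1 ->
  u ^+ 5 * trq q (A * u ^+ 3 + B * u ^+ 5) = (trace_poly A B).[u ^+ 2].
Proof.
move=> hu; rewrite horner_Poly /= /trq exprqD.
rewrite [(A * _) ^+ q]exprMn [(B * _) ^+ q]exprMn -!exprM.
have e3 : u ^+ 5 * u ^+ (3 * q) = u ^+ 2.
  by rewrite -exprD -(exprUq 3 2 hu); congr (_ ^+ _); lia.
have e5 : u ^+ 5 * u ^+ (5 * q) = 1.
  by rewrite -exprD -(expr0 u) -(exprUq 5 0 hu); congr (_ ^+ _); lia.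
transitivity (A * u ^+ 8 + B * u ^+ 10 + A ^+ q * (u ^+ 5 * u ^+ (3 * q))
              + B ^+ q * (u ^+ 5 * u ^+ (5 * q))); first ring.
by rewrite e3 e5; ring.
Qed.

Definition cw_zeros (c : {ffun Uq L q -> L}) : {set Uq L q} := [set u | c u == 0].

Lemma card_trace_cw_zeros A B : (A != 0) || (B != 0) ->
  (#|cw_zeros (trace_cw A B)| <= 5)%N.
Proof.
move=> nzAB; set Z := cw_zeros _.
have sqr_inj := sqrf_inj_pchar2 L_pchar2.
have := max_poly_roots (trace_poly_neq0 nzAB)
  (rs := [seq val u ^+ 2 | u : Uq L q <- enum Z]).
rewrite size_map -cardE => Zlt; rewrite -ltnS (leq_trans (Zlt _ _)) //.
- apply/allP => x /mapP [u]; rewrite mem_enum inE ffunE => /eqP hu ->.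
  by apply/rootP; rewrite -trace_poly_horner ?UqP // hu mulr0.
- by rewrite map_inj_uniq ?enum_uniq // => u v /sqr_inj /val_inj.
- by rewrite (leq_trans (size_Poly _)).
Qed.

Lemma hwt_add_zeros (c : {ffun Uq L q -> L}) :
  (hwt c + #|cw_zeros c|)%N = q.+1.
Proof.
rewrite -[RHS]card_Uq -(cardsC (cw_zeros c)) addnC; congr (_ + _).
by apply: eq_card => u; rewrite !inE.
Qed.

Lemma trace_cwD A B A' B' :
  trace_cw A B + trace_cw A' B' = trace_cw (A + A') (B + B').
Proof. by apply/ffunP => u; rewrite !ffunE -trqD; congr trq; ring. Qed.

Lemma trace_cwZ l A B : l ^+ q = l ->
  [ffun u => l * trace_cw A B u] = trace_cw (l * A) (l * B).
Proof. by move=> lq; apply/ffunP => u; rewrite !ffunE -trqZ //; congr trq; ring. Qed.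

Lemma trace_cw00 : trace_cw 0 0 = 0.
Proof.
by apply/ffunP => u; rewrite !ffunE !mul0r addr0 /trq expr0n expn_eq0 addr0.
Qed.

Lemma exprq_trace_cw A B (u : Uq L q) : trace_cw A B u ^+ q = trace_cw A B u.
Proof. by rewrite ffunE exprq_trq. Qed.

Section LargeField.
Hypothesis q_gt5 : (5 < q)%N.

Lemma trace_cw_eq0 A B : trace_cw A B = 0 -> A = 0 /\ B = 0.
Proof.
move=> c0; have all0 : cw_zeros (trace_cw A B) = setT.
  by apply/setP => u; rewrite !inE c0 ffunE eqxx.
have : ~~ ((A != 0) || (B != 0)).
  apply/negP => /card_trace_cw_zeros.
  by rewrite all0 cardsT card_Uq; have := q_gt5; lia.
by rewrite negb_or !negbK => /andP [/eqP -> /eqP ->].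
Qed.

Lemma trace_cw_inj : injective (fun ab : L * L => trace_cw ab.1 ab.2).
Proof.
move=> [A B] [A' B'] /= e.
have [] : A - A' = 0 /\ B - B' = 0.
  rewrite !(GRing.subr_pchar2 L_pchar2); apply: trace_cw_eq0; rewrite -trace_cwD e.
  by apply/ffunP => u; rewrite !ffunE (addrr_pchar2 L_pchar2).
by move=> /subr0_eq -> /subr0_eq ->.
Qed.

Lemma trace_cw35 a3 a2 a5 a4 :
  [ffun u => trq q (cw35 q (a3, a2, a5, a4) u)]
    = trace_cw (a3 + a2 ^+ q) (a5 + a4 ^+ q).
Proof.
apply/ffunP => u; rewrite !ffunE !trqD !mulrDl !trqD.
rewrite -[trq q (a2 * _)]trq_exprq -[trq q (a4 * _)]trq_exprq !exprMn -!exprM.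
have -> : ((q - 2) * q = q.+1 * (q - 3) + 3)%N by nia.
have -> : ((q - 4) * q = q.+1 * (q - 5) + 5)%N by nia.
by rewrite !exprUq ?UqP // !addrA.
Qed.

Lemma trace_codeE :
  trace_code (C35 L q) = [set trace_cw ab.1 ab.2 | ab in [set: L * L]].
Proof.
apply/setP => c; apply/imsetP/imsetP => [[_ /imsetP [[[[a3 a2] a5] a4] _ ->] ->]|].
  by exists (a3 + a2 ^+ q, a5 + a4 ^+ q); rewrite ?inE // trace_cw35.
case=> [[A B]] _ ->; exists (cw35 q (A, 0, B, 0)); first exact: imset_f.
by rewrite trace_cw35 expr0n expn_eq0 !addr0.
Qed.

Lemma trace_codeP c :
  reflect (exists A B, c = trace_cw A B) (c \in trace_code (C35 L q)).
Proof.
rewrite trace_codeE; apply: (iffP imsetP) => [[[A B] _ ->]|[A [B ->]]].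
  by exists A, B.
by exists (A, B).
Qed.

Lemma card_trace_code : #|trace_code (C35 L q)| = (q ^ 4)%N.
Proof.
rewrite trace_codeE (card_imset _ trace_cw_inj) cardsT card_prod hL.
by rewrite !expnS expn0 muln1 !mulnA.
Qed.

Lemma hwt_trace_cw_ge A B : trace_cw A B != 0 -> (q - 4 <= hwt (trace_cw A B))%N.
Proof.
move=> c0; have nzAB : (A != 0) || (B != 0).
  apply: contraNT c0; rewrite negb_or !negbK => /andP [/eqP -> /eqP ->].
  by rewrite trace_cw00.
by have := hwt_add_zeros (trace_cw A B); have := card_trace_cw_zeros nzAB; lia.
Qed.

End LargeField.

Lemma Uq_exprq u : u ^+ q.+1 = 1 -> (u ^+ q) ^+ q.+1 = 1.
Proof. by move=> hu; rewrite exprAC hu expr1n. Qed.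

Lemma quadr_trq u : u ^+ q.+1 = 1 -> quadr (trq q u) u = 0.
Proof.
move=> hu; have -> : quadr (trq q u) u = (u ^+ 2 + u ^+ 2) + (u ^+ q.+1 + 1).
  by rewrite /quadr /trq [u ^+ q.+1]exprSr; ring.
by rewrite hu (addrr_pchar2 L_pchar2) (addrr_pchar2 L_pchar2) addr0.
Qed.

Lemma quadr_trq_exprq u : u ^+ q.+1 = 1 -> quadr (trq q u) (u ^+ q) = 0.
Proof. by move=> hu; rewrite -trq_exprq // quadr_trq // Uq_exprq. Qed.

Lemma trq_neq0_neq_exprq x : trq q x != 0 -> x != x ^+ q.
Proof. by apply: contra_neq => e; rewrite /trq -e (addrr_pchar2 L_pchar2). Qed.

Lemma trq_homography w x : w ^+ q = w -> quadr 1 w = 0 ->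
  x ^+ q.+1 = 1 -> trq q x != 1 ->
  exists2 x', x' ^+ q.+1 = 1 & trq q x' = trq q x / (trq q x + 1).
Proof.
move=> wq w2 hx; set y := trq q x; set d := y + 1 => y1.
have d0 : d != 0 by rewrite /d (addr_eq0_pchar2 L_pchar2).
have yq : y ^+ q = y by rewrite exprq_trq.
have dq : d ^+ q = d by rewrite exprqD // yq expr1n.
have xq' : ((x + w * y) / d) ^+ q = (x ^+ q + w * y) / d.
  by rewrite exprMn exprVn exprqD // exprMn wq yq dq.
exists ((x + w * y) / d).
  (* w + w^2 = 1 gives (x + w y)(x^q + w y) = x^(q+1) + y^2 = (y + 1)^2. *)
  have num : (x + w * y) * (x ^+ q + w * y)
    = d ^+ 2 + (y ^+ 2 * quadr 1 w - 2%:R * (y ^+ 2 + y) + (x ^+ q.+1 - 1)).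
    by rewrite /d /y /trq /quadr [x ^+ q.+1]exprSr; ring.
  rewrite exprS xq' mulrACA -invfM num w2 (pcharf0 L_pchar2) hx.
  by rewrite mulr0 mul0r !subrr add0r addr0 -expr2 divff // expf_neq0.
by rewrite {1}/trq xq' -mulrDl addrACA (addrr_pchar2 L_pchar2) addr0.
Qed.

Lemma quintic_root_trace_cw_zero a v (hv : v ^+ q.+1 = 1) : a ^+ q = a ->
  1 + a * v + a * v ^+ 4 + v ^+ 5 = 0 ->
  v \in val @: cw_zeros (trace_cw (a ^+ 2) 1).
Proof.
move=> aq hP; apply/imsetP; exists (exist _ v (introT eqP hv)) => //.
have sq : (trace_poly (a ^+ 2) 1).[v ^+ 2] = (1 + a * v + a * v ^+ 4 + v ^+ 5) ^+ 2.
  by rewrite horner_Poly /= expr1n exprAC aq !(sqrrD_pchar2 L_pchar2); ring.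
have := trace_poly_horner (a ^+ 2) 1 hv; rewrite sq hP expr0n /= => /eqP.
by rewrite inE ffunE mulf_eq0 expf_eq0 /= (negbTE (Uq_neq0 hv)).
Qed.

Lemma trq_Uq_not_cube_root x : x ^+ q.+1 = 1 -> x ^+ 3 != 1 ->
  trq q x != 0 /\ trq q x != 1.
Proof.
move=> hx x3; split; apply: contra_neq x3 => yE.
  by rewrite (quadr0_root L_pchar2 (_ : quadr 0 x = 0)) ?expr1n // -yE quadr_trq.
by apply/eqP; rewrite -subr_eq0 -subr1_mul_quadr1 -yE quadr_trq // mulr0.
Qed.

Section EvenDegree.
Hypothesis m_even : ~~ odd m.

Lemma exprq_mod3 : (q %% 3 = 1)%N.
Proof.
by rewrite -(odd_double_half m) (negbTE m_even) add0n -muln2 mulnC expnM -modnXm exp1n.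
Qed.

Lemma dvdn3_card_pred : (3 %| #|L|.-1)%N.
Proof. by rewrite card_L_predE // dvdn_mulr // -eqn_mod_dvd ?expn_gt0 // exprq_mod3. Qed.

Lemma exists_cube_root_unity : exists2 w : L, w ^+ q = w & quadr 1 w = 0.
Proof.
have := card_unity_roots dvdn3_card_pred.
rewrite (cardD1 (1 : L)) inE unity_rootE expr1n eqxx add1n => -[card2].
have [w] : exists w, w \in [predD1 [pred x : L | 3.-unity_root x] & 1].
  by apply/card_gt0P; rewrite card2.
rewrite !inE => /andP [w1 /unity_rootP w3].
exists w; first by rewrite -(expr_mod q w3) exprq_mod3 expr1.
have := subr1_mul_quadr1 w; rewrite w3 subrr => /eqP.
by rewrite mulf_eq0 subr_eq0 (negbTE w1) => /eqP.
Qed.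

Let q_ge4 : (4 <= q)%N.
Proof.
have := finNzRing_gt1 L; rewrite hL.
by case: m m_even => [|[|k]] // _ _; rewrite !expnS mulnA leq_pmulr ?expn_gt0.
Qed.

Lemma exists_Uq_not_cube_root : exists2 x : L, x ^+ q.+1 = 1 & x ^+ 3 != 1.
Proof.
have : ~~ ([pred x : L | q.+1.-unity_root x] \subset [pred x | 3.-unity_root x]).
  apply/negP => /subset_leq_card.
  rewrite !card_unity_roots ?dvdn3_card_pred ?card_L_predE ?dvdn_mull //.
  by rewrite leqNgt ltnS (leq_trans _ q_ge4).
by case/subsetPn => x; rewrite !inE !unity_rootE => /eqP hx x3; exists x.
Qed.

Lemma trace_cw_five_zeros :
  exists a, (5 <= #|cw_zeros (trace_cw (a ^+ 2) 1%R)|)%N.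
Proof.
have [w wq w2] := exists_cube_root_unity.
have [x1 hx1 x1c] := exists_Uq_not_cube_root.
set y1 := trq q x1.
have [y1_neq0 y1_neq1] := trq_Uq_not_cube_root hx1 x1c.
have [x2 hx2 y2E] := trq_homography wq w2 hx1 y1_neq1; set y2 := trq q x2 in y2E *.
have [y2_neq0 y1_neq_y2 y12] := div_addr1_pchar2 L_pchar2 y1_neq0 y1_neq1.
rewrite -y2E in y2_neq0 y1_neq_y2 y12.
pose a := 1 + y1 + y2.
have aq : a ^+ q = a by rewrite /a (exprqD (1 + y1)) (exprqD 1) expr1n !exprq_trq.
exists a; rewrite -(card_imset _ val_inj).
have zero v : v ^+ q.+1 = 1 -> (v + 1) * quadr y1 v * quadr y2 v = 0 ->
    v \in val @: cw_zeros (trace_cw (a ^+ 2) 1).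
  move=> hv; rewrite -(quintic_factor L_pchar2 _ y12).
  exact: quintic_root_trace_cw_zero.
rewrite cardE; apply: (@uniq_leq_size _ [:: 1; x1; x1 ^+ q; x2; x2 ^+ q]).
  apply: (uniq_quadr_roots L_pchar2 y1_neq0 y2_neq0 y1_neq_y2).
  all: rewrite ?quadr_trq ?quadr_trq_exprq ?trq_neq0_neq_exprq //.
apply/allP; rewrite /= !mem_enum andbT; apply/and5P; split; apply: zero.
all: rewrite ?expr1n ?Uq_exprq ?quadr_trq ?quadr_trq_exprq ?mulr0 ?mul0r //.
by rewrite (addrr_pchar2 L_pchar2) !mul0r.
Qed.

Lemma exists_trace_cw_min_wt : (5 < q)%N ->
  exists a, trace_cw (a ^+ 2) 1 != 0 /\ hwt (trace_cw (a ^+ 2) 1) = (q - 4)%N.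
Proof.
move=> q_gt5; have [a zeros_ge5] := trace_cw_five_zeros; exists a; split.
  by apply/eqP => /trace_cw_eq0 [] // _ /eqP; rewrite oner_eq0.
have nz : (a ^+ 2 != 0) || (1 != 0 :> L) by rewrite oner_neq0 orbT.
have := hwt_add_zeros (trace_cw (a ^+ 2) 1).
by have := card_trace_cw_zeros nz; lia.
Qed.

End EvenDegree.

End TraceCode.

Theorem theorem22 (m : nat) (hm : (4 <= m)%N) (hev : ~~ odd m)
  (L : finFieldType) (hL : #|L| = (2 ^ m * 2 ^ m)%N) :
  is_code_params (trace_code (C35 L (2 ^ m)))
    (2 ^ m).+1 4 (2 ^ m - 4).
Proof.
have q_gt5 : (5 < 2 ^ m)%N by rewrite (leq_trans _ (leq_pexp2l _ hm)).
have memP := trace_codeP hL q_gt5.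
split.
  by move=> c u /memP [A [B ->]]; rewrite inE exprq_trace_cw.
split.
  by apply/memP; exists 0, 0; rewrite trace_cw00.
split.
  move=> c1 c2 /memP [A [B ->]] /memP [A' [B' ->]].
  by apply/memP; exists (A + A'), (B + B'); rewrite trace_cwD.
split.
  move=> l c; rewrite inE => /eqP lq /memP [A [B ->]].
  by apply/memP; exists (l * A), (l * B); rewrite trace_cwZ.
split; first exact: card_Uq.
split; first exact: card_trace_code.
split.
  have [a min_wt] := exists_trace_cw_min_wt hL hev q_gt5.
  by exists (trace_cw m (a ^+ 2) 1) => //; apply/memP; exists (a ^+ 2), 1.
by move=> c /memP [A [B ->]]; apply: hwt_trace_cw_ge.
Qed.
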